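(* Let $\delta_j,\delta_k$ be coprime integers with $1<\delta_j<\delta_k$, let $r=\delta_k \bmod \delta_j$, and let $f\colon \mathcal B(\delta_j,r)\to\mathcal B(\delta_k,\delta_j)$ be given by $f(x',y')=(y',\,x'-y'\lfloor \delta_k/\delta_j\rfloor)$. Then $f$ is well defined (maps into $\mathcal B(\delta_k,\delta_j)$), injective, and additive: whenever $\mathbf a,\mathbf b,\mathbf a+\mathbf b\in\mathcal B(\delta_j,r)$, one has $f(\mathbf a+\mathbf b)=f(\mathbf a)+f(\mathbf b)$.
   Context: For coprime positive integers $p,q$ and $i\in\{1,\ldots,\max\{p,q\}\}$, the $\lambda$-B\'ezout couple of $i$ for $(p,q)$ is the unique $(x,y)\in\mathbb Z^2$ with $xp+yq=i$ and $0<y\le p$, and the $\mu$-B\'ezout couple of $i$ for $(p,q)$ is the unique $(x,y)\in\mathbb Z^2$ with $xp+yq=i$ and $0<x\le q$. $\mathcal B(p,q)$ denotes the set of all $\lambda$- and $\mu$-B\'ezout couples for $(p,q)$ (for all such $i$); an element of $\mathcal B(p,q)$ is called a B\'ezout couple for $(p,q)$. Note that $1\le r<\delta_j$ since $\gcd(\delta_j,\delta_k)=1$ and $\delta_j>1$. *)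

From mathcomp Require Import all_boot all_order all_algebra.
Set Implicit Arguments. Unset Strict Implicit. Unset Printing Implicit Defensive.
Import Order.TTheory GRing.Theory Num.Theory.
Local Open Scope ring_scope.

Definition lambda_bezout (p q : nat) (c : int * int) : Prop :=
  exists i : nat, (1 <= i <= maxn p q)%N /\
    c.1 * p%:Z + c.2 * q%:Z = i%:Z /\ 0 < c.2 <= p%:Z.

Definition mu_bezout (p q : nat) (c : int * int) : Prop :=
  exists i : nat, (1 <= i <= maxn p q)%N /\
    c.1 * p%:Z + c.2 * q%:Z = i%:Z /\ 0 < c.1 <= q%:Z.

Definition bezout_couple (p q : nat) (c : int * int) : Prop :=
  lambda_bezout p q c \/ mu_bezout p q c.

Definition add_couple (a b : int * int) : int * int := (a.1 + b.1, a.2 + b.2).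

Definition bezout_f (dj dk : nat) (c : int * int) : int * int :=
  (c.2, c.1 - c.2 * (dk %/ dj)%N%:Z).

From mathcomp Require Import all_boot all_order all_algebra.
From mathcomp Require Import zify ring.
Import Order.TTheory GRing.Theory Num.Theory.

(** With [n = Q p + r], the map [f (x, y) = (y, x - Q y)] is linear and
    invertible, and it is the change of variables turning [x p + y r] into
    [y n + (x - Q y) p]; hence it preserves the represented integer [i].
    A λ-couple ([0 < y <= p]) becomes a μ-couple for [(n, p)] outright.  For a
    μ-couple ([0 < x <= r]) one checks [-p < y <= 0], which places
    [x - Q y] in [(0, n]].  None of this uses coprimality or [p < n]. *)

Local Open Scope ring_scope.

Section BezoutShift.

Variables p n : nat.

Let Q : int := (n %/ p)%N%:Z.
Let r : nat := (n %% p)%N.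

Lemma divn_eqZ : n%:Z = Q * p%:Z + r%:Z.
Proof. by rewrite {1}(divn_eq n p) /Q /r; lia. Qed.

Lemma bezout_f_combination (c : int * int) :
  (bezout_f p n c).1 * n%:Z + (bezout_f p n c).2 * p%:Z = c.1 * p%:Z + c.2 * r%:Z.
Proof. by rewrite /= divn_eqZ; ring. Qed.

Lemma maxn_mod_le : (maxn p r <= maxn n p)%N.
Proof. by have := leq_mod n p; rewrite /r; lia. Qed.

Lemma lambda_bezout_f (c : int * int) :
  lambda_bezout p r c -> mu_bezout n p (bezout_f p n c).
Proof.
move=> [i [i_range [c_eq y_bounds]]]; exists i; split.
- by have := maxn_mod_le; lia.
- by split; [rewrite bezout_f_combination | ].
Qed.

Lemma mu_bezout_second_bounds {x y : int} {i : nat} :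
  (0 < p)%N -> (i <= maxn p r)%N -> (1 <= i)%N ->
  x * p%:Z + y * r%:Z = i%:Z -> 0 < x <= r%:Z -> - p%:Z < y <= 0.
Proof.
move=> p_gt0 i_le i_ge1 xy_eq x_bounds.
have r_lt_p : (r < p)%N by rewrite ltn_mod.
have i_le_p : (i <= p)%N by lia.
(* [x p >= p >= i] forces [y r <= 0], and [x p <= r p] forces [y r > -r p]. *)
nia.
Qed.

Lemma mu_bezout_f (c : int * int) :
  mu_bezout p r c -> lambda_bezout n p (bezout_f p n c).
Proof.
case: c => x y [i [i_range /= [c_eq x_bounds]]]; exists i; split.
  by have := maxn_mod_le; lia.
split; first by rewrite bezout_f_combination.
rewrite /= -/Q; have n_eq := divn_eqZ.
have [p0 | p_gt0] := posnP p.
  by move: x_bounds n_eq; rewrite /Q p0 divn0; lia.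
have /andP[i_ge1 i_le] := i_range.
have := mu_bezout_second_bounds p_gt0 i_le i_ge1 c_eq x_bounds.
have Q_ge0 : 0 <= Q by rewrite /Q.
nia.
Qed.

Lemma bezout_couple_f (c : int * int) :
  bezout_couple p r c -> bezout_couple n p (bezout_f p n c).
Proof.
by case=> [/lambda_bezout_f | /mu_bezout_f]; [right | left].
Qed.

Lemma bezout_f_inj : injective (bezout_f p n).
Proof. by move=> [x1 y1] [x2 y2] [<- /eqP]; rewrite subr_eq addrNK => /eqP ->. Qed.

Lemma bezout_fD (a b : int * int) :
  bezout_f p n (add_couple a b) = add_couple (bezout_f p n a) (bezout_f p n b).
Proof. by rewrite /bezout_f /add_couple /=; congr pair; ring. Qed.

End BezoutShift.

Theorem proposition3p5 (dj dk : nat)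
  (Hcop : coprime dj dk) (H1 : (1 < dj)%N) (H2 : (dj < dk)%N) :
  (forall c, bezout_couple dj (dk %% dj) c ->
             bezout_couple dk dj (bezout_f dj dk c)) /\
  (forall a b, bezout_couple dj (dk %% dj) a -> bezout_couple dj (dk %% dj) b ->
             bezout_f dj dk a = bezout_f dj dk b -> a = b) /\
  (forall a b, bezout_couple dj (dk %% dj) a -> bezout_couple dj (dk %% dj) b ->
             bezout_couple dj (dk %% dj) (add_couple a b) ->
             bezout_f dj dk (add_couple a b) =
             add_couple (bezout_f dj dk a) (bezout_f dj dk b)).
Proof.
split; first exact: bezout_couple_f.
split; first by move=> a b _ _ /bezout_f_inj.
by move=> a b _ _ _; exact: bezout_fD.
Qed.
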